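(* Let $q$ be a prime power, $0<k<n$, and $X\in\mathcal{G}_q(n,k)$ with Ferrers diagram $\mathcal{F}_X$ and entries vector $x=(x_1,\dots,x_{|\mathcal{F}_X|})$ of its Ferrers tableaux form $\mathcal{F}(X)$. Then the number $\mathrm{Ind}_{\mathcal{F}}(X)$ of subspaces $Y\in\mathcal{G}_q(n,k)$ with $Y<X$ in the Ferrers-tableaux order is \[\mathrm{Ind}_{\mathcal{F}}(X)=\sum_{i=|\mathcal{F}_X|+1}^{k(n-k)}\alpha_iq^i+\mathrm{ind}_{|\mathcal{F}_X|}(\mathcal{F}_X)\,q^{|\mathcal{F}_X|}+\{x\},\] where $\alpha_i=p(k,n-k,i)$.
   Context: $\mathcal{G}_q(n,k)$ is the set of $k$-dimensional subspaces of $\mathbb{F}_q^n$; field elements are identified with $\mathbb{Z}_q=\{0,\dots,q-1\}$. For $X$, $\mathrm{RE}(X)$ is the unique $k\times n$ reduced row echelon matrix whose rows span $X$. The Ferrers tableaux form $\mathcal{F}(X)$ is obtained from $\mathrm{RE}(X)$ by deleting, in each row, the leading one and all entries to its left, and also deleting all columns containing a leading one; the remaining entries of each row are right-justified. The Ferrers diagram $\mathcal{F}_X$ is $\mathcal{F}(X)$ with entries replaced by dots; $|\mathcal{F}_X|$ is the number of dots. $\mathcal{F}_X$ is represented by $(\mathcal{F}_{n-k},\dots,\mathcal{F}_1)$, $\mathcal{F}_i$ the number of dots in the $i$-th column counted from the right. The entries vector $x=(x_1,\dots,x_{|\mathcal{F}_X|})$ lists the entries of $\mathcal{F}(X)$ numbered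 from right to left within a row and rows from top to bottom; $\{x\}=\sum_t x_tq^{|\mathcal{F}_X|-t}$. For diagrams of equal size, $\mathcal{F}<\widetilde{\mathcal{F}}$ if $\mathcal{F}_i>\widetilde{\mathcal{F}}_i$ at the least $i$ with $\mathcal{F}_i\ne\widetilde{\mathcal{F}}_i$; $\mathrm{ind}_m(\mathcal{F})$ is the number of Ferrers diagrams of size $m$ in a $k\times(n-k)$ box preceding $\mathcal{F}$. Order on $\mathcal{G}_q(n,k)$: $X<Y$ if $|\mathcal{F}_X|>|\mathcal{F}_Y|$; or $|\mathcal{F}_X|=|\mathcal{F}_Y|$ and $\mathcal{F}_X<\mathcal{F}_Y$; or $\mathcal{F}_X=\mathcal{F}_Y$ and $\{x\}<\{y\}$ ($y$ the entries vector of $\mathcal{F}(Y)$). $p(a,\eta,s)$ is the number of partitions of $s$ whose Ferrers diagram fits in an $a\times\eta$ box. *)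

From HB Require Import structures.
From mathcomp Require Import all_boot all_order all_algebra.
Set Implicit Arguments. Unset Strict Implicit. Unset Printing Implicit Defensive.

Section Ferrers.
Variables (F : finFieldType) (idx : F -> 'I_#|F|) (k n : nat).

(* q = #|F| ; field elements identified with Z_q via the bijection idx. *)

(* Subspaces of F^n are represented by their canonical square generator
   matrix <<M>>%MS (mxalgebra); G_q(n,k) is the set of those of rank k. *)
Definition Grass : {set 'M[F]_n} :=
  [set M : 'M[F]_n | (<<M>>%MS == M) && (\rank M == k)].

Definition piv (A : 'M[F]_(k, n)) (i : 'I_k) : nat :=
  find (fun j : 'I_n => A i j != 0%R) (enum 'I_n).

(* entry (i, j) of A for a natural-number column index j (0 if j >= n) *)
Definition ent (A : 'M[F]_(k, n)) (i : 'I_k) (j : nat) : F :=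
  if @insub _ (fun j => j < n) 'I_n j is Some j' then A i j' else 0%R.

Definition is_rre (A : 'M[F]_(k, n)) : bool :=
  [&& [forall i, piv A i < n],
      [forall i, ent A i (piv A i) == 1%R],
      [forall i : 'I_k, forall i' : 'I_k, (i < i')%N ==> (piv A i < piv A i')] &
      [forall i : 'I_k, forall i' : 'I_k, (i != i') ==> (ent A i' (piv A i) == 0%R)]].

Definition RE (X : 'M[F]_n) : 'M[F]_(k, n) :=
  odflt 0%R [pick A : 'M[F]_(k, n) | is_rre A && (A == X)%MS].

Definition nonpiv (A : 'M[F]_(k, n)) : seq nat :=
  [seq j <- iota 0 n | j \notin [seq piv A i | i <- enum 'I_k]].

(* entries of row i of the Ferrers tableaux form, from right to left *)
Definition row_entries (A : 'M[F]_(k, n)) (i : 'I_k) : seq F :=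
  [seq ent A i j | j <- rev [seq j <- nonpiv A | piv A i < j]].

Definition entries (X : 'M[F]_n) : seq F :=
  flatten [seq row_entries (RE X) i | i <- enum 'I_k].

Definition entval (X : 'M[F]_n) : nat :=
  let s := entries X in
  \sum_(t < size s) (idx (nth 0%R s t) : nat) * #|F| ^ (size s - t.+1).

(* Ferrers diagram in a k x (n-k) box, given by its column sizes:
   D c = F_(c+1), the number of dots in the (c+1)-th column from the right *)
Definition diagram := {ffun 'I_(n - k) -> 'I_k.+1}.

Definition is_ferrers (D : diagram) : bool :=
  [forall c : 'I_(n - k), forall c' : 'I_(n - k), (c <= c')%N ==> (D c' <= D c)%N].

Definition dsize (D : diagram) : nat := \sum_(c < n - k) (D c : nat).

Definition diag_lt (D E : diagram) : bool :=
  [exists c : 'I_(n - k),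
     [forall c' : 'I_(n - k), (c' < c)%N ==> (D c' == E c')] && (E c < D c)%N].

Definition diag_of (X : 'M[F]_n) : diagram :=
  [ffun c : 'I_(n - k) =>
     inord #|[set i : 'I_k | piv (RE X) i < nth 0 (nonpiv (RE X)) (n - k - 1 - c)]|].

Definition ind_m (m : nat) (D : diagram) : nat :=
  #|[set E : diagram | [&& is_ferrers E, dsize E == m & diag_lt E D]]|.

Definition sub_lt (X Y : 'M[F]_n) : bool :=
  let DX := diag_of X in let DY := diag_of Y in
  (dsize DY < dsize DX)%N ||
  ((dsize DX == dsize DY) &&
   (diag_lt DX DY || ((DX == DY) && (entval X < entval Y)%N))).

Definition Ind (X : 'M[F]_n) : nat := #|[set Y in Grass | sub_lt Y X]|.

End Ferrers.

(* p(a, eta, s): number of partitions of s whose Ferrers diagram fits in an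
   a x eta box (at most a parts, each at most eta) *)
Definition npart (a eta s : nat) : nat :=
  #|[set f : {ffun 'I_a -> 'I_eta.+1} |
     [forall i : 'I_a, forall j : 'I_a, (i <= j)%N ==> (f j <= f i)%N] &&
     (\sum_(i < a) (f i : nat) == s)]|.

From mathcomp Require Import all_boot all_order all_algebra.
From mathcomp Require Import zify.

(* RE identifies G_q(n,k) with the k x n reduced row echelon matrices.  Those
   with a given Ferrers diagram D form a Schubert cell: D determines the
   pivots, the |D| tableau positions are free, so the cell has q^|D| elements
   and reading the tableau entries as base-q digits ({x}) maps it bijectively
   onto [0, q^|D|).  The three clauses of the order then contribute all the
   cells of size > |F_X| (there are p(k, n-k, i) diagrams of size i, by
   conjugating partitions), the ind(F_X) earlier cells of size |F_X|, and the
   {x} matrices preceding X in its own cell. *)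

Set Implicit Arguments. Unset Strict Implicit. Unset Printing Implicit Defensive.
Import GRing.Theory.
Local Open Scope ring_scope.
Local Open Scope nat_scope.

Lemma strict_mono_gap k (f : 'I_k -> nat) :
  (forall i i' : 'I_k, i < i' -> f i < f i') ->
  forall i i' : 'I_k, i <= i' -> f i + (i' - i) <= f i'.
Proof.
move=> f_incr i i'.
suff gap m (j : 'I_k) : (j : nat) = m -> i <= j -> f i + (j - i) <= f j by exact: gap.
elim: m j => [|m IHm] j Ej le_ij.
  have -> : i = j by apply/val_inj => /=; lia.
  by rewrite subnn addn0.
case: (eqVneq i j) => [->|ne]; first by rewrite subnn addn0.
have lt_m : m < k by have := ltn_ord j; lia.
have le_im : i <= Ordinal lt_m by rewrite /=; have : (i : nat) != j by []; lia.
have := IHm (Ordinal lt_m) erefl le_im; have := f_incr (Ordinal lt_m) j.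
by rewrite /= Ej ltnSn => /(_ isT); lia.
Qed.

(** * Reduced row echelon matrices *)

Section Pivots.
Variables (F : finFieldType) (k n : nat).
Implicit Types (A B : 'M[F]_(k, n)) (i l : 'I_k).

Lemma ent_ord A i (j : 'I_n) : ent A i j = A i j.
Proof. by rewrite /ent; case: insubP => [j' _ /val_inj -> //|]; rewrite ltn_ord. Qed.

Lemma entry_before_piv A i (j : 'I_n) : j < piv A i -> A i j = 0%R.
Proof. by move/(before_find j); rewrite nth_ord_enum => /negbFE/eqP. Qed.

Lemma piv_leq A i (j : 'I_n) : A i j != 0%R -> piv A i <= j.
Proof. by apply: contraR; rewrite -ltnNge => /entry_before_piv ->; rewrite eqxx. Qed.

Lemma piv_first_nz A i (j : 'I_n) : A i j != 0%R ->
  (forall j' : 'I_n, j' < j -> A i j' = 0%R) -> piv A i = j.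
Proof.
move=> nz_j zero_before; apply/eqP; rewrite eqn_leq piv_leq // leqNgt; apply/negP => lt_j.
have has_nz : has (fun j => A i j != 0%R) (enum 'I_n).
  by rewrite has_find size_enum_ord (ltn_trans lt_j).
have := nth_find j has_nz; rewrite -/(piv A i) zero_before ?eqxx //.
by rewrite nth_enum_ord // (ltn_trans lt_j).
Qed.

Definition colsel (p : 'I_k -> nat) : 'M[F]_(n, k) :=
  \matrix_(j, l) (((j : nat) == p l)%:R)%R.

Lemma mul_colsel m (W : 'M[F]_(m, n)) (p : 'I_k -> nat) (i : 'I_m) l (lt_pn : p l < n) :
  (W *m colsel p) i l = W i (Ordinal lt_pn).
Proof.
rewrite !mxE (bigD1 (Ordinal lt_pn)) //= big1 => [|j ne]; first by rewrite !mxE eqxx mulr1 addr0.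
by rewrite !mxE; case: eqP => [E|]; [case/eqP: ne; apply: val_inj | rewrite mulr0].
Qed.

Section ReducedEchelon.
Variable A : 'M[F]_(k, n).
Hypothesis rreA : is_rre A.

Lemma rre_piv_lt i : piv A i < n.
Proof. by case/and4P: rreA => /forallP. Qed.

Definition pivo i : 'I_n := Ordinal (rre_piv_lt i).

Lemma rre_piv_one i : A i (pivo i) = 1%R.
Proof. by case/and4P: rreA => _ /forallP /(_ i) /eqP; rewrite -ent_ord. Qed.

Lemma rre_piv_col i i' : i != i' -> A i' (pivo i) = 0%R.
Proof.
case/and4P: rreA => _ _ _ /forallP /(_ i) /forallP /(_ i') + ne.
by rewrite ne -ent_ord => /eqP.
Qed.

Lemma rre_piv_incr i i' : i < i' -> piv A i < piv A i'.
Proof. by case/and4P: rreA => _ _ /forallP /(_ i) /forallP /(_ i') /implyP. Qed.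

Lemma rre_piv_mono i i' : i <= i' -> piv A i <= piv A i'.
Proof. by rewrite leq_eqVlt => /orP[/eqP/val_inj ->|/rre_piv_incr/ltnW]. Qed.

Lemma rre_piv_ltE i i' : (piv A i < piv A i') = (i < i').
Proof.
apply/idP/idP => [|/rre_piv_incr//].
by apply: contraLR; rewrite -!leqNgt => /rre_piv_mono.
Qed.

Lemma rre_piv_inj : injective (piv A).
Proof.
move=> i i' E; apply/eqP; case: (ltngtP i i') => [lt|lt|/val_inj -> //].
  by have := rre_piv_incr lt; rewrite E ltnn.
by have := rre_piv_incr lt; rewrite E ltnn.
Qed.

Definition rre_sel := colsel (piv A).

Lemma mul_rre_sel : A *m rre_sel = 1%:M.
Proof.
apply/matrixP => i l; rewrite (mul_colsel _ _ (rre_piv_lt l)) -/(pivo l) !mxE.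
by case: (eqVneq i l) => [->|ne]; rewrite ?rre_piv_one // rre_piv_col // eq_sym.
Qed.

Lemma rre_rank : \rank A = k.
Proof. by apply/eqP/row_freeP; exists rre_sel; exact: mul_rre_sel. Qed.

Lemma sub_rre_coord m (v : 'M[F]_(m, n)) : (v <= A)%MS -> v = (v *m rre_sel) *m A.
Proof. by case/submxP => D ->; rewrite -(mulmxA D A) mul_rre_sel mulmx1. Qed.

Lemma sub_rre_lead (v : 'rV[F]_n) : (v <= A)%MS -> v != 0%R ->
  exists l, (forall j : 'I_n, j < piv A l -> v ord0 j = 0%R) /\ v ord0 (pivo l) != 0%R.
Proof.
move=> sv nz; set c := v *m rre_sel; have Ev : v = c *m A := sub_rre_coord sv.
have [l0 nz_l0] : exists l, c ord0 l != 0%R.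
  apply/existsP; apply: contraNT nz; rewrite negb_exists => /forallP c0.
  rewrite Ev; apply/eqP/matrixP => a j; rewrite !mxE big1 // => l _.
  by rewrite (ord1 a); move/negPn/eqP: (c0 l) => ->; rewrite mul0r.
have [l1 nz_l1 l1_min] :=
  @arg_minnP _ l0 (fun l => c ord0 l != 0%R) (fun l : 'I_k => (l : nat)) nz_l0.
exists l1; split.
  move=> j lt_j; rewrite Ev !mxE big1 // => l _.
  case: (ltnP l l1) => [lt_l|le_l].
    case: (eqVneq (c ord0 l) 0%R) => [->|/l1_min]; first by rewrite mul0r.
    by rewrite leqNgt lt_l.
  by rewrite entry_before_piv ?mulr0 // (leq_trans lt_j) ?rre_piv_mono.
rewrite Ev !mxE (bigD1 l1) //= big1 ?addr0 ?rre_piv_one ?mulr1 // => l ne.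
by rewrite rre_piv_col ?mulr0 // eq_sym.
Qed.

End ReducedEchelon.

Lemma sub_rre_piv A B : is_rre A -> is_rre B -> (B <= A)%MS ->
  forall i, exists l, piv B i = piv A l.
Proof.
move=> rreA rreB sBA i.
have sv : (row i B <= A)%MS by apply: submx_trans (row_sub i B) sBA.
have nz : row i B != 0%R.
  apply/negP => /eqP/matrixP/(_ ord0 (pivo rreB i)); rewrite !mxE rre_piv_one //.
  by move/eqP; rewrite oner_eq0.
have [l [zero_before nz_l]] := sub_rre_lead rreA sv nz.
exists l; apply/eqP; rewrite eqn_leq; apply/andP; split.
  by apply: (piv_leq (j := pivo rreA l)); rewrite mxE in nz_l.
rewrite leqNgt; apply/negP => lt_l; have := zero_before (pivo rreB i) lt_l.
by rewrite mxE rre_piv_one // => /eqP; rewrite oner_eq0.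
Qed.

Lemma sub_rre_piv_leq A B : is_rre A -> is_rre B -> (B <= A)%MS ->
  forall i, piv A i <= piv B i.
Proof.
move=> rreA rreB sBA.
have [s Es] : {s : 'I_k -> 'I_k | forall i, piv B i = piv A (s i)}.
  exists (fun i => odflt i [pick l | piv B i == piv A l]) => i.
  case: pickP => [l /eqP //|none].
  by have [l E] := sub_rre_piv rreA rreB sBA i; move: (none l); rewrite E eqxx.
have s_incr i i' : i < i' -> s i < s i'.
  by move=> lt; rewrite -(rre_piv_ltE rreA) -!Es rre_piv_incr.
move=> i; rewrite Es (rre_piv_mono rreA) //.
have k_gt0 : 0 < k by have := ltn_ord i; lia.
have := strict_mono_gap (f := fun i => val (s i)) s_incr (i := Ordinal k_gt0) (i' := i) isT.
rewrite /= subn0; lia.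
Qed.

Lemma rre_eqmx_eq A B : is_rre A -> is_rre B -> (A == B)%MS -> A = B.
Proof.
move=> rreA rreB /andP[sAB sBA].
have Ep i : piv A i = piv B i by apply/eqP; rewrite eqn_leq !sub_rre_piv_leq.
have Esel : rre_sel A = rre_sel B by apply/matrixP => j l; rewrite !mxE Ep.
apply/row_matrixP => i.
have sv : (row i A <= B)%MS by apply: submx_trans (row_sub i A) sAB.
by rewrite {1}(sub_rre_coord rreB sv) -Esel -row_mul mul_rre_sel // -row_mul mul1mx.
Qed.

End Pivots.

(** * Existence of the reduced row echelon form *)

Section Existence.
Variables (F : finFieldType) (n : nat).

Lemma sub_rowspace_zero_col m p (M : 'M[F]_(m, n)) (W : 'M[F]_(p, n)) (j : 'I_n) :
  (W <= M)%MS -> (forall i, M i j = 0%R) -> forall i, W i j = 0%R.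
Proof. by case/submxP => D -> M0 i; rewrite mxE big1 // => l _; rewrite M0 mulr0. Qed.

Lemma exists_lead_col m (M : 'M[F]_(m, n)) : M != 0%R ->
  exists i0 (j0 : 'I_n), M i0 j0 != 0%R /\ forall i (j : 'I_n), j < j0 -> M i j = 0%R.
Proof.
move=> nzM.
have [x0 nz_x0] : exists x : 'I_m * 'I_n, M x.1 x.2 != 0%R.
  apply/existsP; apply: contraNT nzM; rewrite negb_exists => /forallP M0.
  by apply/eqP/matrixP => i j; rewrite mxE; move/negPn/eqP: (M0 (i, j)).
have [[i0 j0] /= nz_ij min_j] :=
  @arg_minnP _ x0 (fun x : 'I_m * 'I_n => M x.1 x.2 != 0%R) (fun x => val x.2) nz_x0.
exists i0, j0; split=> // i j lt_j; apply/eqP; apply: contraTT lt_j => nz.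
by have := min_j (i, j) nz; rewrite /= -leqNgt.
Qed.

Section Extend.
Variables (r : nat) (A : 'M[F]_(r, n)) (v : 'rV[F]_n) (j0 : 'I_n).
Hypotheses (rreA : is_rre A) (v_j0 : v ord0 j0 = 1%R)
  (v_before : forall j : 'I_n, j < j0 -> v ord0 j = 0%R)
  (piv_after : forall l, j0 < piv A l).

Definition reduce_row := (v - (v *m rre_sel A) *m A)%R.

Lemma zero_upto_j0 l (j : 'I_n) : j <= j0 -> A l j = 0%R.
Proof. by move=> le_j; rewrite entry_before_piv // (leq_ltn_trans le_j). Qed.

Lemma reduce_row_before (j : 'I_n) : j <= j0 ->
  reduce_row ord0 j = v ord0 j.
Proof.
move=> le_j; rewrite !mxE big1 ?subr0 // => l _.
by rewrite zero_upto_j0 ?mulr0.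
Qed.

Lemma reduce_row_piv l : reduce_row ord0 (pivo rreA l) = 0%R.
Proof.
have : (reduce_row *m rre_sel A = 0)%R.
  by rewrite /reduce_row mulmxBl -(mulmxA (v *m rre_sel A)) (mul_rre_sel rreA) mulmx1 subrr.
by move/matrixP/(_ ord0 l); rewrite (mul_colsel _ _ (rre_piv_lt rreA l)) => ->; rewrite mxE.
Qed.

Let B := col_mx reduce_row A.

Lemma piv_extend_top i : piv B (lshift r i) = j0.
Proof.
rewrite (ord1 i); apply: piv_first_nz => [|j lt_j]; rewrite col_mxEu reduce_row_before //.
- by rewrite v_j0 oner_eq0.
- exact: v_before.
- exact: ltnW.
Qed.

Lemma piv_extend_bottom l : piv B (rshift 1 l) = piv A l.
Proof. by apply: eq_find => j; rewrite col_mxEd. Qed.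

Lemma rre_extend : is_rre B.
Proof.
apply/and4P; split.
- apply/forallP => i; case: (split_ordP i) => l ->.
    by rewrite piv_extend_top.
  by rewrite piv_extend_bottom rre_piv_lt.
- apply/forallP => i; case: (split_ordP i) => l ->.
    by rewrite piv_extend_top ent_ord col_mxEu (ord1 l) reduce_row_before ?v_j0.
  by rewrite piv_extend_bottom -[piv A l]/(val (pivo rreA l)) ent_ord col_mxEd rre_piv_one.
- apply/forallP => i; apply/forallP => i'.
  case: (split_ordP i) => l ->; case: (split_ordP i') => l' -> /=; apply/implyP;
    rewrite ?piv_extend_top ?piv_extend_bottom /= => lt.
  all: try (by rewrite (ord1 l) (ord1 l') in lt); try (by apply: piv_after).
  all: try (by have := ltn_ord l'; lia).
  by apply: (rre_piv_incr rreA); rewrite -(ltn_add2l 1).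
- apply/forallP => i; apply/forallP => i'.
  case: (split_ordP i) => l ->; case: (split_ordP i') => l' -> /=; apply/implyP => ne;
    rewrite ?piv_extend_top ?piv_extend_bottom.
  + by case/eqP: ne; rewrite (ord1 l) (ord1 l').
  + by rewrite ent_ord col_mxEd zero_upto_j0.
  + by rewrite -[piv A l]/(val (pivo rreA l)) ent_ord col_mxEu (ord1 l') reduce_row_piv.
  + by rewrite -[piv A l]/(val (pivo rreA l)) ent_ord col_mxEd rre_piv_col.
Qed.

End Extend.

Lemma clear_col m (M : 'M[F]_(m, n)) (v : 'rV[F]_n) (j0 : 'I_n) :
  (v <= M)%MS -> v ord0 j0 = 1%R ->
  let M' := (M - col j0 M *m v)%R in
  [/\ forall i, M' i j0 = 0%R, (M' <= M)%MS, \rank M' < \rank M & (M <= M' + v)%MS].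
Proof.
move=> sv v_j0 M'.
have M'_j0 i : M' i j0 = 0%R by rewrite !mxE big_ord1 !mxE v_j0 mulr1 subrr.
have sM' : (M' <= M)%MS by rewrite addmx_sub ?eqmx_opp // (submx_trans (submxMl _ _)).
split=> //.
  have : (M' < M)%MS.
    rewrite ltmxE sM' /=; apply/negP => sMM'.
    have := sub_rowspace_zero_col (submx_trans sv sMM') M'_j0 ord0.
    by rewrite v_j0 => /eqP; rewrite oner_eq0.
  by rewrite ltmxErank => /andP[].
have -> : M = (M' + col j0 M *m v)%R by rewrite /M' subrK.
by rewrite addmx_sub ?addsmxSl // (submx_trans (submxMl _ _)) ?addsmxSr.
Qed.

Lemma rre_exists_rank N m (M : 'M[F]_(m, n)) : \rank M < N ->
  exists r (A : 'M[F]_(r, n)), is_rre A /\ (A == M)%MS.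
Proof.
elim: N m M => [//|N IHN] m M rkM.
have [->|nzM] := eqVneq M 0%R.
  exists 0, 0%R; split; first by apply/and4P; split; apply/forallP => -[].
  by rewrite /eqmx !sub0mx.
have [i0 [j0 [nz_M0 M_before]]] := exists_lead_col nzM.
pose v : 'rV[F]_n := ((M i0 j0)^-1 *: row i0 M)%R.
have sv : (v <= M)%MS by rewrite scalemx_sub // row_sub.
have v_j0 : v ord0 j0 = 1%R by rewrite !mxE mulVf.
have v_before (j : 'I_n) : j < j0 -> v ord0 j = 0%R.
  by move=> lt_j; rewrite !mxE (M_before i0 j lt_j) mulr0.
have [M'_j0 sM' rkM' sMM'] := clear_col sv v_j0.
set M' := (M - _)%R in M'_j0 sM' rkM' sMM'.
(* prepending v, reduced against the echelon form A' of M', gives that of M *)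
have [r [A' [rreA' /andP[sA'M' sM'A']]]] := IHN _ M' (leq_trans rkM' (ltnSE rkM)).
have sA'M := submx_trans sA'M' sM'.
have piv_after l : j0 < piv A' l.
  have A'_le (j : 'I_n) : j <= j0 -> A' l j = 0%R.
    rewrite leq_eqVlt => /orP[/eqP/val_inj ->|lt_j].
      exact: sub_rowspace_zero_col sA'M' M'_j0 l.
    by apply: sub_rowspace_zero_col sA'M _ l => i; exact: M_before.
  rewrite ltnNge; apply/negP => le_piv.
  by have := A'_le (pivo rreA' l) le_piv; rewrite rre_piv_one => /eqP; rewrite oner_eq0.
exists (1 + r), (col_mx (reduce_row A' v) A'); split.
  exact: (rre_extend rreA' v_j0 v_before piv_after).
rewrite /eqmx col_mx_sub addmx_sub ?eqmx_opp ?sv ?sA'M ?(submx_trans (submxMl _ _)) //=.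
apply: submx_trans sMM' _; rewrite -addsmxE addsmx_sub (submx_trans sM'A') ?addsmxSr //=.
have Ev : v = (reduce_row A' v + (v *m rre_sel A') *m A')%R by rewrite /reduce_row subrK.
rewrite {1}Ev addmx_sub ?addsmxSl //.
exact: submx_trans (submxMl _ _) (addsmxSr _ _).
Qed.

End Existence.

Section Grassmannian.
Variables (F : finFieldType) (k n : nat).

Lemma rre_exists (M : 'M[F]_n) : \rank M = k ->
  exists A : 'M[F]_(k, n), is_rre A /\ (A == M)%MS.
Proof.
move=> rkM; have [r [A [rreA eqAM]]] := rre_exists_rank (ltnSn (\rank M)).
have Er : r = k by rewrite -(rre_rank rreA) -rkM; exact: eqmx_rank.
by subst r; exists A.
Qed.

Lemma RE_spec (X : 'M[F]_n) : X \in Grass F k n -> is_rre (RE k X) /\ (RE k X == X)%MS.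
Proof.
rewrite inE => /andP[_ /eqP rkX]; rewrite /RE; case: pickP => [A /andP[] //|none].
by have [A [rreA eqAX]] := rre_exists rkX; move: (none A); rewrite rreA eqAX.
Qed.

Lemma genmx_rre_Grass (A : 'M[F]_(k, n)) : is_rre A -> <<A>>%MS \in Grass F k n.
Proof. by move=> rreA; rewrite inE genmx_id eqxx /= genmxE (rre_rank rreA). Qed.

Lemma RE_genmx (A : 'M[F]_(k, n)) : is_rre A -> RE k <<A>>%MS = A.
Proof.
move=> rreA; have [rreRE eqRE] := RE_spec (genmx_rre_Grass rreA).
by apply: rre_eqmx_eq => //; apply/eqmxP; apply: eqmx_trans (eqmxP eqRE) (genmxE A).
Qed.

Lemma Grass_genmx_RE (X : 'M[F]_n) : X \in Grass F k n -> X = <<RE k X>>%MS.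
Proof.
move=> GX; have [_ eqRE] := RE_spec GX.
move: GX; rewrite inE => /andP[/eqP genX _]; rewrite -{1}genX.
by apply: eq_genmx; apply: eqmx_sym; apply/eqmxP.
Qed.

Lemma RE_inj : {in Grass F k n &, injective (@RE F k n)}.
Proof. by move=> X Y GX GY E; rewrite (Grass_genmx_RE GX) (Grass_genmx_RE GY) E. Qed.

Lemma card_Grass_RE (P : pred 'M[F]_(k, n)) :
  #|[set Y in Grass F k n | P (RE k Y)]| = #|[set A : 'M[F]_(k, n) | is_rre A && P A]|.
Proof.
rewrite -(card_in_imset (f := @RE F k n)); last first.
  by move=> X Y /setIdP[GX _] /setIdP[GY _]; exact: RE_inj.
apply: eq_card => A; rewrite [in RHS]inE; apply/imsetP/idP.
  by case=> Y; rewrite inE => /andP[GY PY] ->; rewrite PY (RE_spec GY).1.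
case/andP=> rreA PA; exists <<A>>%MS; last by rewrite RE_genmx.
by rewrite inE genmx_rre_Grass // RE_genmx.
Qed.

End Grassmannian.

Lemma count_gt_iota x N : count (fun j => x < j) (iota 0 N) = N - x.+1.
Proof.
elim: N => [//|N IHN]; rewrite -[N.+1]addn1 iotaD count_cat IHN /= addn0.
by case: ltnP => /=; lia.
Qed.

Lemma count_lt_iota t N : count (fun j => j < t) (iota 0 N) = minn t N.
Proof.
elim: N => [|N IHN]; first by rewrite minn0.
by rewrite -[N.+1]addn1 iotaD count_cat IHN /= addn0; case: ltnP => /=; lia.
Qed.

Lemma count_predI_predC (T : Type) (a b : pred T) s :
  count a s = count (predI a b) s + count (predI a (predC b)) s.
Proof. by elim: s => //= x s ->; case: (a x); case: (b x) => /=; lia. Qed.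

Lemma count_mem_subseq (T : eqType) (a : pred T) (s t : seq T) :
  uniq s -> uniq t -> {subset s <= t} ->
  count (fun x => a x && (x \in s)) t = count a s.
Proof.
move=> uniq_s uniq_t sub_st; rewrite -count_filter; apply/permP.
apply: uniq_perm => //; first exact: filter_uniq.
by move=> x; rewrite mem_filter; apply/andP/idP => [[]//|s_x]; split=> //; apply: sub_st.
Qed.

Lemma card_set_sum (T : finType) (P : pred T) : #|[set i | P i]| = \sum_(i : T) P i.
Proof. by rewrite -sum1_card big_mkcond; apply: eq_bigr => i _; rewrite inE; case: (P i). Qed.

Lemma card_ord_count (P : pred nat) a : #|[set i : 'I_a | P i]| = count P (iota 0 a).
Proof.
rewrite -sum1_card (eq_bigl (fun i : 'I_a => P i)) => [|i]; last by rewrite inE.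
by rewrite -(big_mkord P (fun _ => 1)) sum1_count /index_iota subn0.
Qed.

Lemma card_ord_lt a t : #|[set i : 'I_a | i < t]| = minn t a.
Proof. by rewrite (card_ord_count (fun i => i < t)) count_lt_iota. Qed.

Lemma card_ord_gt a x : #|[set i : 'I_a | x < i]| = a - x.+1.
Proof. by rewrite (card_ord_count (fun i => x < i)) count_gt_iota. Qed.

Section ConjugatePartition.
Variables (a : nat) (f : 'I_a -> nat).

Definition conj_part (c : nat) := #|[set i : 'I_a | c < f i]|.

Lemma conj_part_leq c : conj_part c <= a.
Proof. by rewrite /conj_part (leq_trans (max_card _)) ?card_ord. Qed.

Lemma conj_part_mono c c' : c <= c' -> conj_part c' <= conj_part c.
Proof.
move=> le_c; apply: subset_leq_card; apply/subsetP => i; rewrite !inE.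
exact: leq_ltn_trans.
Qed.

Lemma sum_conj_part b : (forall i, f i <= b) ->
  \sum_(c < b) conj_part c = \sum_(i < a) f i.
Proof.
move=> f_le; rewrite /conj_part; under eq_bigr do rewrite card_set_sum.
rewrite exchange_big /=; apply: eq_bigr => i _.
by rewrite -card_set_sum card_ord_lt; have := f_le i; lia.
Qed.

Hypothesis f_anti : forall i i' : 'I_a, i <= i' -> f i' <= f i.

Lemma conj_part_ltE (i : 'I_a) c : (i < conj_part c) = (c < f i).
Proof.
case: (ltnP c (f i)) => [lt_c|le_f].
  have : minn i.+1 a <= conj_part c.
    rewrite -card_ord_lt; apply: subset_leq_card; apply/subsetP => i'.
    by rewrite !inE ltnS => le_i'; exact: leq_trans lt_c (f_anti le_i').
  by have := ltn_ord i; lia.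
apply/negbTE; rewrite -leqNgt.
have : conj_part c <= minn i a.
  rewrite -card_ord_lt; apply: subset_leq_card; apply/subsetP => i'.
  rewrite !inE => lt_c; rewrite ltnNge; apply/negP => le_i.
  by have := leq_trans (f_anti le_i) le_f; rewrite leqNgt lt_c.
by lia.
Qed.

Lemma conj_partK b : (forall i, f i <= b) ->
  forall i : 'I_a, #|[set c : 'I_b | i < conj_part c]| = f i.
Proof.
move=> f_le i; rewrite (eq_card (B := [set c : 'I_b | c < f i])).
  by rewrite card_ord_lt; have := f_le i; lia.
by move=> c; rewrite !inE conj_part_ltE.
Qed.

End ConjugatePartition.

Lemma sorted_gt_nth_count (t : seq nat) x c : sorted (fun a b => b < a) t -> c < size t ->
  (x < nth 0 t c) = (c < count (fun j => x < j) t).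
Proof.
elim: t c => [//|y t IHt] c /= sorted_t lt_c.
have lt_y : all (fun z => z < y) t.
  by apply: (order_path_min (leT := fun a b => b < a)) sorted_t => a b d /=; lia.
case: (ltnP x y) => [lt_xy|le_yx].
  case: c lt_c => [|c] lt_c //=; rewrite add1n ltnS IHt //; exact: path_sorted sorted_t.
have -> : count (fun j => x < j) t = 0.
  apply/eqP; rewrite -leqn0 leqNgt -has_count; apply/hasPn => z t_z.
  by move/allP: lt_y => /(_ z t_z) /=; lia.
case: c lt_c => [|c] lt_c /=; first by apply/negbTE; rewrite -leqNgt.
move/allP: lt_y => /(_ _ (mem_nth 0 (ltnSE lt_c))) /= lt_nth.
by apply/negbTE; rewrite -leqNgt; lia.
Qed.

Lemma sorted_nth_count (s : seq nat) x c : sorted ltn s -> c < size s ->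
  (x < nth 0 s (size s - c.+1)) = (c < count (fun j => x < j) s).
Proof.
move=> sorted_s lt_c; rewrite -nth_rev // -count_rev.
by rewrite sorted_gt_nth_count ?rev_sorted // size_rev.
Qed.

Section PivotShape.
Variables (F : finFieldType) (k n : nat).
Implicit Types (A : 'M[F]_(k, n)) (i : 'I_k).

Definition pivs A := [seq piv A i | i <- enum 'I_k].

Definition rowlen A i := count (fun j => piv A i < j) (nonpiv A).

Definition diagA A : diagram k n :=
  [ffun c : 'I_(n - k) =>
     inord #|[set i : 'I_k | piv A i < nth 0 (nonpiv A) (n - k - 1 - c)]|].

Lemma size_row_entries A i : size (row_entries A i) = rowlen A i.
Proof. by rewrite /row_entries size_map size_rev size_filter. Qed.

Variable A : 'M[F]_(k, n).
Hypothesis rreA : is_rre A.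

Lemma uniq_pivs : uniq (pivs A).
Proof. by rewrite map_inj_uniq ?enum_uniq //; exact: rre_piv_inj. Qed.

Lemma pivs_sub_iota : {subset pivs A <= iota 0 n}.
Proof. by move=> x /mapP[i _ ->]; rewrite mem_iota add0n rre_piv_lt. Qed.

Lemma size_nonpiv : size (nonpiv A) = n - k.
Proof.
have npivs : count (mem (pivs A)) (iota 0 n) = k.
  rewrite -[LHS]/(count (fun j => predT j && (j \in pivs A)) (iota 0 n)).
  rewrite count_mem_subseq ?iota_uniq ?uniq_pivs //; last exact: pivs_sub_iota.
  by rewrite count_predT size_map size_enum_ord.
rewrite /nonpiv size_filter -[count _ _]/(count (predC (mem (pivs A))) (iota 0 n)).
by have := count_predC (mem (pivs A)) (iota 0 n); rewrite size_iota npivs; lia.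
Qed.

Lemma sorted_nonpiv : sorted ltn (nonpiv A).
Proof. by apply: sorted_filter; [exact: ltn_trans | exact: iota_ltn_sorted]. Qed.

Lemma piv_room i : piv A i + (k - i.+1) < n.
Proof.
have lt_last : k.-1 < k by have := ltn_ord i; lia.
have := strict_mono_gap (rre_piv_incr rreA) (i := i) (i' := Ordinal lt_last).
have := rre_piv_lt rreA (Ordinal lt_last); have := ltn_ord i.
by rewrite /= => ? ? /(_ ltac:(lia)); lia.
Qed.

Lemma piv_geq i : i <= piv A i.
Proof.
have k_gt0 : 0 < k by have := ltn_ord i; lia.
have := strict_mono_gap (rre_piv_incr rreA) (i := Ordinal k_gt0) (i' := i) isT.
by rewrite /= subn0; lia.
Qed.

(* the non-pivot columns right of piv A i are the n - 1 - piv A i columns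
   there, minus the k - 1 - i pivot columns of the rows below *)
Lemma rowlenE i : rowlen A i = (n - (piv A i).+1) - (k - i.+1).
Proof.
rewrite /rowlen /nonpiv count_filter.
have := count_predI_predC (fun j => piv A i < j) (mem (pivs A)) (iota 0 n).
rewrite count_gt_iota.
have -> : count (predI (fun j => piv A i < j) (mem (pivs A))) (iota 0 n) = k - i.+1.
  rewrite (count_mem_subseq (fun j => piv A i < j) uniq_pivs (iota_uniq 0 n) pivs_sub_iota).
  rewrite /pivs count_map -card_ord_gt (card_ord_count (fun j => i < j)).
  by rewrite -val_enum_ord count_map; apply: eq_count => i' /=; rewrite rre_piv_ltE.
by move=> ->; rewrite addKn; apply: eq_count => j /=; rewrite andbC.
Qed.

Lemma rowlen_leq i : rowlen A i <= n - k.
Proof. by rewrite rowlenE; have := piv_room i; have := piv_geq i; lia. Qed.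

Lemma rowlen_anti i i' : i <= i' -> rowlen A i' <= rowlen A i.
Proof.
move=> le_i; rewrite !rowlenE.
have := strict_mono_gap (rre_piv_incr rreA) le_i.
by have := piv_room i'; have := piv_room i; have := piv_geq i; lia.
Qed.

Lemma diagAE c : (diagA A c : nat) = conj_part (rowlen A) c.
Proof.
rewrite ffunE inordK; last by rewrite ltnS (leq_trans (max_card _)) ?card_ord.
apply: eq_card => i; rewrite !inE.
have -> : n - k - 1 - c = size (nonpiv A) - c.+1 by rewrite size_nonpiv; have := ltn_ord c; lia.
by rewrite sorted_nth_count ?sorted_nonpiv // size_nonpiv.
Qed.

End PivotShape.

(** * Schubert cells *)

Section PivotCell.
Variables (F : finFieldType) (k n : nat) (p : 'I_k -> nat).
Implicit Types (i : 'I_k) (A : 'M[F]_(k, n)).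

Definition pivp := [seq p i | i <- enum 'I_k].
Definition nonpivp := [seq j <- iota 0 n | j \notin pivp].

(* the positions of an rre matrix with pivots p that are not forced to 0 or 1 *)
Definition free_pos (x : 'I_k * 'I_n) : bool := ((x.2 : nat) \notin pivp) && (p x.1 < x.2).
Local Notation free_t := {x : 'I_k * 'I_n | free_pos x}.

Definition cell_mx (g : {ffun free_t -> F}) : 'M[F]_(k, n) :=
  \matrix_(i, j) (if (j : nat) == p i then 1%R else
                  if @insub _ free_pos free_t (i, j) is Some x then g x else 0%R).

Definition cell_coords A : {ffun free_t -> F} := [ffun x => A (val x).1 (val x).2].

Definition pivot_cell := [set A : 'M[F]_(k, n) | is_rre A && [forall i, piv A i == p i]].

Lemma pivot_cellP A : reflect (is_rre A /\ forall i, piv A i = p i) (A \in pivot_cell).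
Proof.
rewrite inE; apply: (iffP andP) => [[rreA /forallP pA]|[rreA pA]].
  by split=> // i; apply/eqP.
by split=> //; apply/forallP => i; rewrite pA.
Qed.

Lemma pivot_cell_nonpiv A : A \in pivot_cell -> nonpiv A = nonpivp.
Proof. by case/pivot_cellP => _ pA; rewrite /nonpiv /nonpivp /pivp (eq_map pA). Qed.

Lemma pivot_cell_rowlen A i : A \in pivot_cell -> rowlen A i = count (fun j => p i < j) nonpivp.
Proof. by move=> cellA; rewrite /rowlen (pivot_cell_nonpiv cellA); case/pivot_cellP: cellA => _ ->. Qed.

Lemma card_free_pos : #|{: free_t}| = \sum_i count (fun j => p i < j) nonpivp.
Proof.
rewrite card_sig -sum1_card big_mkcond /=.
rewrite -(pair_bigA _ (fun i j => if (i, j) \in [pred x | free_pos x] then 1 else 0)).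
apply: eq_bigr => i _.
rewrite /nonpivp count_filter -(card_ord_count (predI (fun j => p i < j) (fun j => j \notin pivp))).
rewrite card_set_sum; apply: eq_bigr => j _; rewrite inE /free_pos /=.
by rewrite andbC; case: (_ && _).
Qed.

Hypothesis p_incr : forall i i', i < i' -> p i < p i'.
Hypothesis p_lt : forall i, p i < n.

Lemma p_inj : injective p.
Proof.
move=> i i' E; apply/eqP; case: (ltngtP i i') => [lt|lt|/val_inj -> //].
  by have := p_incr lt; rewrite E ltnn.
by have := p_incr lt; rewrite E ltnn.
Qed.

Lemma cell_mx_fixed g i (j : 'I_n) : (j : nat) != p i -> ~~ free_pos (i, j) -> cell_mx g i j = 0%R.
Proof.
move=> ne nfree; rewrite mxE (negbTE ne).
by case: insubP => // x free_x; rewrite (negbTE nfree) in free_x.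
Qed.

Lemma piv_cell_mx g i : piv (cell_mx g) i = p i.
Proof.
apply: (piv_first_nz (j := Ordinal (p_lt i))); first by rewrite mxE /= eqxx oner_eq0.
move=> j lt_j; apply: cell_mx_fixed; first by rewrite neq_ltn lt_j.
by rewrite /free_pos /= ltnNge (ltnW lt_j) andbF.
Qed.

Lemma cell_mx_in g : cell_mx g \in pivot_cell.
Proof.
apply/pivot_cellP; split; last exact: piv_cell_mx.
apply/and4P; split.
- by apply/forallP => i; rewrite piv_cell_mx p_lt.
- apply/forallP => i; rewrite piv_cell_mx.
  by rewrite -[p i]/(val (Ordinal (p_lt i))) ent_ord mxE eqxx.
- by apply/forallP => i; apply/forallP => i'; apply/implyP; rewrite !piv_cell_mx; exact: p_incr.
- apply/forallP => i; apply/forallP => i'; apply/implyP => ne; rewrite piv_cell_mx.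
  rewrite -[p i]/(val (Ordinal (p_lt i))) ent_ord cell_mx_fixed //=.
    by apply: contra ne => /eqP /p_inj ->.
  by rewrite /free_pos /= negb_and negbK map_f ?mem_enum.
Qed.

Lemma cell_mxK g : cell_coords (cell_mx g) = g.
Proof.
apply/ffunP => x; rewrite ffunE mxE.
case/andP: (valP x) => _ lt_x; rewrite ifN; last by rewrite neq_ltn lt_x orbT.
by rewrite -surjective_pairing valK.
Qed.

Lemma pivot_cell_fixed A i (j : 'I_n) : A \in pivot_cell -> ~~ free_pos (i, j) ->
  A i j = if (j : nat) == p i then 1%R else 0%R.
Proof.
case/pivot_cellP => rreA pA nfree.
case: eqP => [E|ne].
  have -> : j = pivo rreA i by apply: val_inj; rewrite /= pA.
  exact: rre_piv_one.
move: nfree; rewrite /free_pos /= negb_and negbK => /orP[/mapP[i' _ E]|].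
  have -> : j = pivo rreA i' by apply: val_inj; rewrite /= pA.
  by apply: rre_piv_col; apply/eqP => Ei; apply: ne; rewrite E Ei.
rewrite -leqNgt leq_eqVlt => /orP[/eqP E|lt_j]; first by case: ne.
by apply: entry_before_piv; rewrite pA.
Qed.

Lemma cell_coords_inj : {in pivot_cell &, injective cell_coords}.
Proof.
move=> A B cellA cellB E; apply/matrixP => i j.
case free_ij: (free_pos (i, j)); last by rewrite !pivot_cell_fixed ?free_ij.
by have := congr1 (fun g : {ffun free_t -> F} => g (Sub (i, j) free_ij)) E; rewrite !ffunE.
Qed.

Lemma card_pivot_cell : #|pivot_cell| = #|F| ^ #|{: free_t}|.
Proof.
rewrite -(card_in_imset cell_coords_inj) -card_ffun; apply: eq_card => g.
rewrite inE; apply/imsetP; exists (cell_mx g); [exact: cell_mx_in | by rewrite cell_mxK].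
Qed.

Definition entriesA A : seq F := flatten [seq row_entries A i | i <- enum 'I_k].

Lemma size_entriesA A : size (entriesA A) = \sum_i rowlen A i.
Proof.
rewrite /entriesA size_flatten /shape -map_comp sumnE big_map big_enum /=.
by apply: eq_bigr => i _; rewrite /= size_row_entries.
Qed.

(* the free positions are exactly the tableau positions, read in entriesA order *)
Lemma entriesA_inj A B : A \in pivot_cell -> B \in pivot_cell -> entriesA A = entriesA B -> A = B.
Proof.
move=> cellA cellB E; apply: (cell_coords_inj cellA cellB).
set rA := [seq row_entries A i | i <- enum 'I_k].
set rB := [seq row_entries B i | i <- enum 'I_k].
have Eshape : shape rA = shape rB.
  rewrite /shape -!map_comp; apply: eq_map => i /=.
  by rewrite !size_row_entries !pivot_cell_rowlen.
have Erows : rA = rB by rewrite -(flattenK rA) Eshape -/(entriesA A) E flattenK.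
apply/ffunP => -[[i j] free_ij]; rewrite !ffunE /=.
have Erow : row_entries A i = row_entries B i.
  by move/eq_in_map: Erows => /(_ i); rewrite mem_enum => ->.
move: Erow; rewrite /row_entries !pivot_cell_nonpiv //.
case/pivot_cellP: cellA => _ ->; case/pivot_cellP: cellB => _ ->.
move/eq_in_map => /(_ j); rewrite !ent_ord; apply.
case/andP: free_ij => npiv_j lt_j.
by rewrite mem_rev mem_filter lt_j /nonpivp mem_filter npiv_j mem_iota add0n ltn_ord.
Qed.

End PivotCell.

Section RadixValue.
Variables (F : finFieldType) (idx : F -> 'I_#|F|).
Hypothesis idx_bij : bijective idx.

Definition radix_val (s : seq F) : nat :=
  \sum_(t < size s) idx (nth 0%R s t) * #|F| ^ (size s - t.+1).

Lemma radix_val_cons x s : radix_val (x :: s) = idx x * #|F| ^ size s + radix_val s.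
Proof. by rewrite /radix_val /= big_ord_recl /= subSS subn0. Qed.

Lemma radix_val_lt s : radix_val s < #|F| ^ size s.
Proof.
elim: s => [|x s IHs]; first by rewrite /radix_val big_ord0.
rewrite radix_val_cons /= expnS.
apply: leq_trans (_ : idx x * #|F| ^ size s + #|F| ^ size s <= _); first by rewrite ltn_add2l.
by rewrite addnC -mulSn leq_mul2r ltn_ord orbT.
Qed.

Lemma radix_val_inj s t : size s = size t -> radix_val s = radix_val t -> s = t.
Proof.
elim: s t => [|x s IHs] [|y t] //= [Est] E.
rewrite !radix_val_cons Est in E.
have lt_s := radix_val_lt s; have lt_t := radix_val_lt t; rewrite Est in lt_s.
have q_gt0 : 0 < #|F| by apply/card_gt0P; exists 0%R.
have Exy : (idx x : nat) = idx y.
  have := congr1 (fun m => m %/ #|F| ^ size t) E.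
  by rewrite !divnMDl ?expn_gt0 ?q_gt0 // !divn_small // !addn0.
have Est' : radix_val s = radix_val t.
  by have := congr1 (fun m => m %% #|F| ^ size t) E; rewrite !modnMDl !modn_small.
by rewrite (bij_inj idx_bij (val_inj Exy)) (IHs t Est Est').
Qed.

End RadixValue.

Section SchubertCell.
Variables (F : finFieldType) (k n : nat).
Hypothesis le_kn : k <= n.
Implicit Types (i : 'I_k) (A B : 'M[F]_(k, n)) (D : diagram k n).

Lemma rowlen_diagA A i : is_rre A -> rowlen A i = #|[set c : 'I_(n - k) | i < diagA A c]|.
Proof.
move=> rreA; rewrite -(conj_partK (rowlen_anti rreA) (rowlen_leq rreA) i).
by apply: eq_card => c; rewrite !inE diagAE.
Qed.

Lemma diagA_piv A B : is_rre A -> is_rre B -> diagA A = diagA B -> forall i, piv A i = piv B i.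
Proof.
move=> rreA rreB E i.
have : rowlen A i = rowlen B i by rewrite !rowlen_diagA // E.
by rewrite !rowlenE //; have := piv_room rreA i; have := piv_room rreB i; lia.
Qed.

Lemma dsize_diagA A : is_rre A -> dsize (diagA A) = \sum_i rowlen A i.
Proof.
move=> rreA; rewrite /dsize -(sum_conj_part (rowlen_leq rreA)).
by apply: eq_bigr => c _; exact: diagAE.
Qed.

Lemma ferrers_diagA A : is_rre A -> is_ferrers (diagA A).
Proof.
move=> rreA; apply/forallP => c; apply/forallP => c'; apply/implyP => le_c.
by rewrite !diagAE //; apply: conj_part_mono.
Qed.

Lemma ferrers_anti D : is_ferrers D -> forall c c' : 'I_(n - k), c <= c' -> D c' <= D c.
Proof. by move=> ferrD c c' le_c; move/forallP: ferrD => /(_ c) /forallP /(_ c'); rewrite le_c. Qed.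

Lemma diagram_leq D c : D c <= k.
Proof. by rewrite -ltnS ltn_ord. Qed.

Definition diag_rowlen D i := conj_part (fun c : 'I_(n - k) => val (D c)) i.

(* inverting rowlenE: the pivot of row i is read off its row length *)
Definition diag_piv D i := n - k + i - diag_rowlen D i.

Lemma diag_piv_incr D i i' : i < i' -> diag_piv D i < diag_piv D i'.
Proof.
move=> lt_i; rewrite /diag_piv.
have := conj_part_leq (fun c : 'I_(n - k) => val (D c)) i.
have := conj_part_leq (fun c : 'I_(n - k) => val (D c)) i'.
have := conj_part_mono (fun c : 'I_(n - k) => val (D c)) (ltnW lt_i).
by rewrite -/(diag_rowlen D i) -/(diag_rowlen D i'); lia.
Qed.

Lemma diag_piv_lt D i : diag_piv D i < n.
Proof. by rewrite /diag_piv; have := ltn_ord i; lia. Qed.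

Local Notation cell_of D := (pivot_cell F n (diag_piv D)).

Lemma diagA_pivot_cell D A : is_ferrers D -> A \in cell_of D -> diagA A = D.
Proof.
move=> ferrD /pivot_cellP[rreA pA].
have Erowlen i : rowlen A i = diag_rowlen D i.
  rewrite rowlenE // pA /diag_piv.
  have : diag_rowlen D i <= n - k := conj_part_leq _ _.
  by have := ltn_ord i; lia.
apply/ffunP => c; apply: val_inj => /=; rewrite (diagAE rreA) /conj_part.
rewrite -(conj_partK (ferrers_anti ferrD) (@diagram_leq D) c).
by apply: eq_card => i; rewrite !inE Erowlen.
Qed.

Definition cell_base D : 'M[F]_(k, n) := @cell_mx F k n (diag_piv D) [ffun => 0%R].

Lemma cell_base_in D : cell_base D \in cell_of D.
Proof. by apply: cell_mx_in; [exact: diag_piv_incr | exact: diag_piv_lt]. Qed.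

Definition schubert_cell D := [set A : 'M[F]_(k, n) | is_rre A && (diagA A == D)].

Lemma schubert_pivot_cell D : is_ferrers D -> schubert_cell D = cell_of D.
Proof.
move=> ferrD; apply/setP => A; rewrite inE; apply/andP/idP => [[rreA /eqP EA]|cellA].
  have [rre0 p0] := pivot_cellP _ _ (cell_base_in D).
  apply/pivot_cellP; split=> // i; rewrite -p0; apply: diagA_piv => //.
  by rewrite EA (diagA_pivot_cell ferrD (cell_base_in D)).
by case/pivot_cellP: (cellA) => rreA _; rewrite rreA (diagA_pivot_cell ferrD cellA) eqxx.
Qed.

Lemma size_entriesA_cell D A : is_rre A -> diagA A = D -> size (entriesA A) = dsize D.
Proof. by move=> rreA <-; rewrite size_entriesA dsize_diagA. Qed.

Lemma card_schubert_cell D : is_ferrers D -> #|schubert_cell D| = #|F| ^ dsize D.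
Proof.
move=> ferrD; rewrite schubert_pivot_cell // card_pivot_cell; last first.
- exact: diag_piv_lt.
- exact: diag_piv_incr.
have [rre0 _] := pivot_cellP _ _ (cell_base_in D).
rewrite card_free_pos; congr (_ ^ _).
transitivity (\sum_i rowlen (cell_base D) i).
  by apply: eq_bigr => i _; rewrite (pivot_cell_rowlen i (cell_base_in D)).
by rewrite -dsize_diagA // (diagA_pivot_cell ferrD (cell_base_in D)).
Qed.

End SchubertCell.

Lemma sum_nat_indicator a b x c :
  \sum_(a <= i < b) ((x == i) * c) = ((a <= x) && (x < b)) * c.
Proof.
elim: b => [|b IHb]; first by rewrite big_geq // ltn0 andbF.
case: (leqP a b) => [le_ab|lt_ba]; last first.
  by rewrite big_geq //; case: (leqP a x) => //= le_ax; rewrite ltnS leqNgt (leq_trans lt_ba le_ax).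
rewrite big_nat_recr //= IHb.
case: (eqVneq x b) => [->|ne]; first by rewrite le_ab ltnn ltnSn /= mul0n add0n mul1n.
by rewrite ltnS [x <= b]leq_eqVlt (negbTE ne) mul0n addn0.
Qed.

Lemma sum_bool_mul (T : finType) (P b : pred T) c :
  \sum_(i | P i) (b i * c) = #|[set i | P i && b i]| * c.
Proof.
rewrite -sum_nat_const [RHS](eq_bigl (fun i => P i && b i)) => [|i]; last by rewrite inE.
by rewrite big_mkcondr; apply: eq_bigr => i _; case: (b i); rewrite ?mul1n ?mul0n.
Qed.

(* an injection of a set of size N into [0, N) is onto, so [0, v) has v preimages *)
Lemma card_inj_lt (T : finType) (S : {set T}) (f : T -> nat) N v :
  {in S &, injective f} -> {in S, forall x, f x < N} -> #|S| = N -> v <= N ->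
  #|[set x in S | f x < v]| = v.
Proof.
move=> f_inj f_lt cardS le_vN.
have uniq_fS : uniq [seq f x | x <- enum S].
  by rewrite map_inj_in_uniq ?enum_uniq // => x y; rewrite !mem_enum; apply: f_inj.
have sub_fS : {subset [seq f x | x <- enum S] <= iota 0 N}.
  by move=> _ /mapP[x Sx ->]; rewrite mem_iota add0n f_lt // -mem_enum.
have size_fS : size (iota 0 N) <= size [seq f x | x <- enum S].
  by rewrite size_iota size_map -cardE cardS.
have [_ eq_fS] := uniq_min_size uniq_fS sub_fS size_fS.
have perm_fS := uniq_perm uniq_fS (iota_uniq 0 N) eq_fS.
transitivity (count (fun j => j < v) [seq f x | x <- enum S]).
  rewrite count_map -sum1_count big_enum_cond -sum1_card.
  by apply: eq_bigl => x; rewrite inE.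
by rewrite (permP perm_fS) count_lt_iota; lia.
Qed.

(** * Ferrers diagrams and partitions *)

Section Partitions.
Variables (k n : nat).
Local Notation part := {ffun 'I_k -> 'I_(n - k).+1}.

Definition diagram_of_part (f : part) : diagram k n :=
  [ffun c : 'I_(n - k) => inord (conj_part (fun i => val (f i)) c)].

Definition part_of_diagram (D : diagram k n) : part :=
  [ffun i : 'I_k => inord (conj_part (fun c : 'I_(n - k) => val (D c)) i)].

Lemma diagram_of_partE f c : diagram_of_part f c = conj_part (fun i => val (f i)) c :> nat.
Proof. by rewrite ffunE inordK // ltnS conj_part_leq. Qed.

Lemma part_of_diagramE D i :
  part_of_diagram D i = conj_part (fun c : 'I_(n - k) => val (D c)) i :> nat.
Proof. by rewrite ffunE inordK // ltnS conj_part_leq. Qed.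

Lemma part_leq (f : part) i : f i <= n - k.
Proof. by rewrite -ltnS ltn_ord. Qed.

Let is_part (f : part) := [forall i : 'I_k, forall j : 'I_k, (i <= j) ==> (f j <= f i)].

Lemma part_anti f : is_part f -> forall i i' : 'I_k, i <= i' -> f i' <= f i.
Proof. by move=> /forallP partf i i' le_i; move/forallP: (partf i) => /(_ i'); rewrite le_i. Qed.

Lemma ferrers_diagram_of_part f : is_ferrers (diagram_of_part f).
Proof.
apply/forallP => c; apply/forallP => c'; apply/implyP => le_c.
by rewrite !diagram_of_partE conj_part_mono.
Qed.

Lemma dsize_diagram_of_part f : dsize (diagram_of_part f) = \sum_i f i.
Proof.
rewrite /dsize -(sum_conj_part (part_leq f)).
by apply: eq_bigr => c _; exact: diagram_of_partE.
Qed.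

Lemma part_of_diagram_part D : is_part (part_of_diagram D).
Proof.
apply/forallP => i; apply/forallP => i'; apply/implyP => le_i.
by rewrite !part_of_diagramE conj_part_mono.
Qed.

Lemma sum_part_of_diagram D : \sum_i part_of_diagram D i = dsize D.
Proof.
rewrite /dsize -(sum_conj_part (@diagram_leq k n D)).
by apply: eq_bigr => i _; exact: part_of_diagramE.
Qed.

Lemma part_of_diagramK D : is_ferrers D -> diagram_of_part (part_of_diagram D) = D.
Proof.
move=> ferrD; apply/ffunP => c; apply/val_inj; rewrite /= diagram_of_partE.
rewrite -(conj_partK (ferrers_anti ferrD) (@diagram_leq k n D) c).
by apply: eq_card => i; rewrite !inE /= part_of_diagramE.
Qed.

Lemma diagram_of_part_inj : {in is_part &, injective diagram_of_part}.
Proof.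
move=> f g partf partg E; apply/ffunP => i; apply: val_inj => /=.
rewrite -(conj_partK (part_anti partf) (part_leq f) i) -(conj_partK (part_anti partg) (part_leq g) i).
by apply: eq_card => c; rewrite !inE -!diagram_of_partE E.
Qed.

Lemma npart_ferrers s :
  npart k (n - k) s = #|[set D : diagram k n | is_ferrers D && (dsize D == s)]|.
Proof.
rewrite /npart -(card_in_imset (f := diagram_of_part)); last first.
  by move=> f g /setIdP[partf _] /setIdP[partg _]; exact: diagram_of_part_inj.
apply: eq_card => D; rewrite inE; apply/imsetP/andP => [[f] |[ferrD /eqP sizeD]].
  rewrite inE => /andP[_ /eqP <-] ->.
  by rewrite ferrers_diagram_of_part dsize_diagram_of_part.
exists (part_of_diagram D); last by rewrite part_of_diagramK.
rewrite inE; apply/andP; split; first exact: part_of_diagram_part.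
by rewrite sum_part_of_diagram sizeD.
Qed.

Lemma dsize_leq (D : diagram k n) : dsize D <= k * (n - k).
Proof.
rewrite mulnC -[n - k]card_ord -sum_nat_const.
by apply: leq_sum => c _; exact: diagram_leq.
Qed.

Lemma sum_ferrers_dsize_gt m (c : nat -> nat) :
  \sum_(D : diagram k n | is_ferrers D && (m < dsize D)) c (dsize D) =
  \sum_(m.+1 <= i < (k * (n - k)).+1) npart k (n - k) i * c i.
Proof.
transitivity (\sum_(m.+1 <= i < (k * (n - k)).+1)
               \sum_(D : diagram k n | is_ferrers D) ((dsize D == i) * c i)); last first.
  by apply: eq_bigr => i _; rewrite sum_bool_mul npart_ferrers.
rewrite exchange_big /= big_mkcondr /=; apply: eq_bigr => D ferrD.
transitivity (\sum_(m.+1 <= i < (k * (n - k)).+1) ((dsize D == i) * c (dsize D))).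
  by rewrite sum_nat_indicator ltnS dsize_leq andbT; case: (m < dsize D); rewrite ?mul1n ?mul0n.
by apply: eq_bigr => i _; case: eqP => [->|].
Qed.

End Partitions.

(** * Counting the subspaces preceding X *)

Lemma diag_lt_irr k n (D : diagram k n) : diag_lt D D = false.
Proof. by apply/negbTE/existsP => -[c /andP[_]]; rewrite ltnn. Qed.

Section TableauxOrder.
Variables (F : finFieldType) (idx : F -> 'I_#|F|) (k n : nat).
Hypotheses (idx_bij : bijective idx) (le_kn : k <= n).
Implicit Types (A B : 'M[F]_(k, n)) (D : diagram k n).
Local Notation q := #|F|.

Definition entvalA A := radix_val idx (entriesA A).

(* sub_lt Y X is convertible to rre_lt (RE k Y) (RE k X) *)
Definition rre_lt A B :=
  let DA := diagA A in let DB := diagA B in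
  (dsize DB < dsize DA) ||
  ((dsize DA == dsize DB) && (diag_lt DA DB || ((DA == DB) && (entvalA A < entvalA B)))).

Lemma entvalA_lt A : is_rre A -> entvalA A < q ^ dsize (diagA A).
Proof. by move=> rreA; rewrite -(size_entriesA_cell rreA erefl) radix_val_lt. Qed.

Lemma entvalA_inj D : is_ferrers D -> {in schubert_cell F D &, injective entvalA}.
Proof.
move=> ferrD A B cellA cellB E.
have := cellA; have := cellB; rewrite !inE => /andP[rreB /eqP EB] /andP[rreA /eqP EA].
rewrite (schubert_pivot_cell F le_kn ferrD) in cellA cellB.
apply: (entriesA_inj cellA cellB); apply: (radix_val_inj idx_bij) => //.
by rewrite (size_entriesA_cell rreA EA) (size_entriesA_cell rreB EB).
Qed.

Lemma card_schubert_entvalA_lt D v : is_ferrers D -> v <= q ^ dsize D ->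
  #|[set A in schubert_cell F D | entvalA A < v]| = v.
Proof.
move=> ferrD le_v; apply: card_inj_lt le_v; first exact: entvalA_inj.
  by move=> A; rewrite inE => /andP[rreA /eqP <-]; exact: entvalA_lt.
exact: card_schubert_cell.
Qed.

Lemma card_rre_diag (P : pred (diagram k n)) :
  #|[set A : 'M[F]_(k, n) | is_rre A && P (diagA A)]| = \sum_(D | is_ferrers D && P D) q ^ dsize D.
Proof.
rewrite card_set_sum (partition_big (@diagA F k n) predT) //= [RHS]big_mkcond /=.
apply: eq_bigr => D _; case: ifP => [/andP[ferrD PD]|].
  rewrite -(card_schubert_cell F le_kn ferrD) card_set_sum big_mkcond /=.
  by apply: eq_bigr => A _; case: eqP => [->|]; rewrite ?PD ?andbT ?andbF.
move/negbT; rewrite negb_and => nferrD; apply: big1 => A /eqP EA.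
case rreA: (is_rre A) => //=.
by move: nferrD; rewrite -EA ferrers_diagA //= => /negbTE ->.
Qed.

Lemma card_rre_lt B : is_rre B ->
  let m := dsize (diagA B) in
  #|[set A : 'M[F]_(k, n) | is_rre A && rre_lt A B]| =
    \sum_(m.+1 <= i < (k * (n - k)).+1) npart k (n - k) i * q ^ i
    + ind_m m (diagA B) * q ^ m + entvalA B.
Proof.
move=> rreB m; set DB := diagA B.
have split_lt A : is_rre A && rre_lt A B =
    (is_rre A && (m < dsize (diagA A)))
    + (is_rre A && ((dsize (diagA A) == m) && diag_lt (diagA A) DB))
    + ((A \in schubert_cell F DB) && (entvalA A < entvalA B)) :> nat.
  rewrite inE /rre_lt /m -/DB; case: (is_rre A) => //=.
  have [->|neA] := eqVneq (diagA A) DB.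
    by rewrite diag_lt_irr ltnn eqxx; case: (_ < _).
  by rewrite /= orbF addn0; case: ltngtP.
rewrite card_set_sum (eq_bigr _ (fun A _ => split_lt A)) !big_split /= -!card_set_sum.
rewrite (card_rre_diag (fun D => m < dsize D)) sum_ferrers_dsize_gt.
rewrite (card_rre_diag (fun D => (dsize D == m) && diag_lt D DB)).
rewrite card_schubert_entvalA_lt ?ferrers_diagA ?(ltnW (entvalA_lt rreB)) //.
congr (_ + _ + _); rewrite -sum_nat_const /ind_m.
rewrite (eq_bigr (fun _ => q ^ m)) => [|D /andP[_ /andP[/eqP -> _]] //].
by apply: eq_bigl => D; rewrite inE.
Qed.

End TableauxOrder.

Theorem theorem8 (F : finFieldType) (idx : F -> 'I_#|F|) (Hidx : bijective idx)
  (n k : nat) (Hk : 0 < k) (Hkn : k < n) (X : 'M[F]_n)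
  (HX : X \in Grass F k n) :
  let q := #|F| in
  let m := dsize (diag_of k X) in
  Ind idx k X =
    \sum_(m.+1 <= i < (k * (n - k)).+1) npart k (n - k) i * q ^ i
    + ind_m m (diag_of k X) * q ^ m + entval idx k X.
Proof.
move=> q m; have [rreX _] := RE_spec HX.
rewrite /Ind (card_Grass_RE (fun A => rre_lt idx A (RE k X))).
exact: (card_rre_lt Hidx (ltnW Hkn) rreX).
Qed.
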